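(* Let $f:\mathbb{F}_q^k\to\mathrm{Im}(f)$ with $|\mathrm{Im}(f)|\ge 2$, and let $d_d<d_f$ be positive integers. Suppose $n$ is an integer satisfying $q^{n-k}=\sum_{i=0}^{\lfloor (d_d-1)/2\rfloor}\binom{n}{i}(q-1)^i$. Then $r_f(k:d_d,d_f)\ge n-k+1$.
   Context: $d(\cdot,\cdot)$ is Hamming distance. For $f:\mathbb{F}_q^k\to\mathrm{Im}(f)$ and integers $0\le d_d\le d_f$, an $(f\!:d_d,d_f)$-FCC with redundancy $r$ is a systematic encoding $\mathfrak{C}_f(u)=(u,p_u)\in\mathbb{F}_q^{k+r}$ with $d(\mathfrak{C}_f(u_1),\mathfrak{C}_f(u_2))\ge d_d$ whenever $u_1\ne u_2$ and $\ge d_f$ whenever $f(u_1)\ne f(u_2)$. $r_f(k:d_d,d_f)$ is the minimum $r$ for which such a code exists. *)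

From HB Require Import structures.
From mathcomp Require Import all_boot all_order all_algebra.
Set Implicit Arguments. Unset Strict Implicit. Unset Printing Implicit Defensive.
Import GRing.Theory.

Definition hamming (F : eqType) (m : nat) (x y : 'rV[F]_m) : nat :=
  #|[set i : 'I_m | x ord0 i != y ord0 i]|.

Definition sys_enc (F : Type) (k r : nat) (p : 'rV[F]_k -> 'rV[F]_r)
  (u : 'rV[F]_k) : 'rV[F]_(k + r) := row_mx u (p u).

Definition is_FCC (F : eqType) (T : eqType) (k r : nat)
  (f : 'rV[F]_k -> T) (dd df : nat) (p : 'rV[F]_k -> 'rV[F]_r) : Prop :=
  (forall u1 u2, u1 != u2 -> dd <= hamming (sys_enc p u1) (sys_enc p u2)) /\
  (forall u1 u2, f u1 != f u2 -> df <= hamming (sys_enc p u1) (sys_enc p u2)).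

(* An (f : d_d, d_f)-FCC with redundancy r exists. r_f(k : d_d, d_f) is the
   least such r, so "r_f >= m" means: every r for which one exists is >= m. *)
Definition FCC_exists (F : eqType) (T : eqType) (k : nat)
  (f : 'rV[F]_k -> T) (dd df r : nat) : Prop :=
  exists p : 'rV[F]_k -> 'rV[F]_r, is_FCC f dd df p.

(* With t = (d_d - 1)/2, the codewords (u, p u) of any (f : d_d, d_f)-FCC form
   a code of minimum distance > 2t with q^k words.  If r <= n - k, the
   hypothesis q^(n-k) = V_q(n, t) forces q^r <= V_q(k + r, t), so by counting
   the radius-t balls around the codewords are disjoint and cover all of
   F^(k+r).  Walking from (u1, p u1) to (u2, p u2) one coordinate at a time,
   consecutive words decode to codewords at distance <= 2t + 1 < d_f, which
   must carry the same value of f; hence f would be constant. *)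

From mathcomp Require Import all_boot all_order all_algebra.
From mathcomp Require Import zify ring.
Set Implicit Arguments. Unset Strict Implicit. Unset Printing Implicit Defensive.
Import GRing.Theory.

Section HammingMetric.
Variables (F : eqType) (m : nat).
Implicit Types x y z : 'rV[F]_m.

Lemma hamming_sym x y : hamming x y = hamming y x.
Proof. by apply: eq_card => i; rewrite !inE eq_sym. Qed.

Lemma hamming_triangle x y z : hamming x z <= hamming x y + hamming y z.
Proof.
apply: leq_trans (leq_card_setU _ _); apply: subset_leq_card.
apply/subsetP => i; rewrite !inE.
by case: (x ord0 i =P y ord0 i) => [->|].
Qed.

Definition splice_row x y j : 'rV[F]_m :=
  \row_l (if l < j then y ord0 l else x ord0 l).

Lemma splice_row0 x y : splice_row x y 0 = x.
Proof. by apply/rowP => l; rewrite mxE. Qed.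

Lemma splice_row_full x y : splice_row x y m = y.
Proof. by apply/rowP => l; rewrite mxE ltn_ord. Qed.

Lemma hamming_splice_rowS x y j :
  hamming (splice_row x y j) (splice_row x y j.+1) <= 1.
Proof.
have differ_at_j (l : 'I_m) :
    splice_row x y j ord0 l != splice_row x y j.+1 ord0 l -> val l = j.
  rewrite !mxE; case: (ltngtP l j) => [lj | jl | //].
    by rewrite ltnS (ltnW lj) eqxx.
  by rewrite ltnS leqNgt jl eqxx.
by apply/card_le1_eqP => l1 l2; rewrite !inE => /differ_at_j-l1j /differ_at_j-l2j;
  apply: val_inj; rewrite l1j l2j.
Qed.

End HammingMetric.

Section CoveringCode.
Variables (F : eqType) (m : nat) (A : finType) (T : eqType).
Variables (c : A -> 'rV[F]_m) (g : A -> T) (t : nat).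

(* Decode the words of the coordinate-by-coordinate path from c u1 to c u2. *)
Lemma covering_code_const :
  (forall y, exists u, hamming (c u) y <= t) ->
  (forall u1 u2, hamming (c u1) (c u2) <= t.*2.+1 -> g u1 = g u2) ->
  forall u1 u2, g u1 = g u2.
Proof.
move=> covering g_near u1 u2.
pose dec y := odflt u1 [pick u | hamming (c u) y <= t].
have decP y : hamming (c (dec y)) y <= t.
  rewrite /dec; case: pickP => [u //|none].
  by have [u cover_u] := covering y; have := none u; rewrite cover_u.
have g_dec_near y y' : hamming y y' <= 1 -> g (dec y) = g (dec y').
  move=> yy'; apply: g_near; rewrite -addnn -addnS -add1n.
  apply: leq_trans (hamming_triangle _ y _) _; apply: leq_add; first exact: decP.
  apply: leq_trans (hamming_triangle _ y' _) _; apply: leq_add => //.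
  by rewrite hamming_sym.
have g_dec_code u : g (dec (c u)) = g u.
  apply: g_near; apply: leq_trans (decP _) _; rewrite -addnn; lia.
have g_splice j : g (dec (splice_row (c u1) (c u2) j)) = g u1.
  elim: j => [|j IHj]; first by rewrite splice_row0 g_dec_code.
  by rewrite -IHj; apply/esym/g_dec_near/hamming_splice_rowS.
by rewrite -(g_dec_code u2) -(splice_row_full (c u1) (c u2)) g_splice.
Qed.

End CoveringCode.

Section HammingBall.
Variable F : finZmodType.

Definition row_support m (z : 'rV[F]_m) := [set i | z ord0 i != 0%R].

Lemma hamming_addr m (x z : 'rV[F]_m) : hamming x (x + z)%R = #|row_support z|.
Proof.
apply: eq_card => i; rewrite !inE mxE.
by rewrite -subr_eq0 opprD addrA subrr sub0r oppr_eq0.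
Qed.

Lemma card_row_support_eq m (S : {set 'I_m}) :
  #|[set z : 'rV[F]_m | row_support z == S]| = (#|F| - 1) ^ #|S|.
Proof.
have -> : [set z : 'rV[F]_m | row_support z == S] =
    [set (\row_i h i)%R | h : {ffun 'I_m -> F} in pffun_on 0%R S (predC1 0%R)].
  apply/setP => z; rewrite inE; apply/eqP/imsetP => [<-|[h]].
    exists [ffun i => z ord0 i]; last by apply/rowP => i; rewrite !mxE ffunE.
    apply/pffun_onP; split; first by apply/subsetP => i; rewrite !inE ffunE.
    by move=> a /imageP[i]; rewrite inE => z_i ->; rewrite ffunE inE.
  move=> /pffun_onP[supp_h im_h] ->; apply/setP => i; rewrite !inE mxE.
  apply/idP/idP => [h_i | S_i]; first by apply: (subsetP supp_h); rewrite inE.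
  have /im_h : h i \in image h S by apply/imageP; exists i.
  by rewrite inE.
rewrite card_in_imset ?card_pffun_on ?cardC1 ?subn1 //.
by move=> h1 h2 _ _ /rowP eq_h; apply/ffunP => i; have := eq_h i; rewrite !mxE.
Qed.

Definition hamming_volume q m t := \sum_(0 <= i < t.+1) 'C(m, i) * (q - 1) ^ i.

Lemma card_hamming_ball m t :
  #|[set z : 'rV[F]_m | #|row_support z| <= t]| = hamming_volume #|F| m t.
Proof.
rewrite -sum1_card (partition_big (@row_support m) (fun S => #|S| <= t)); last first.
  by move=> z; rewrite inE.
under eq_bigr => S le_S_t.
  rewrite (eq_bigl [in [set z : 'rV[F]_m | row_support z == S]]); last first.
    by move=> z; rewrite !inE; case: eqP => [->|]; rewrite ?le_S_t ?andbF.
  rewrite sum1_card card_row_support_eq.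
over.
rewrite (partition_big (fun S : {set 'I_m} => (inord #|S| : 'I_t.+1)) predT) //.
rewrite /hamming_volume big_mkord; apply: eq_bigr => i _.
rewrite (eq_bigl [in [set S : {set 'I_m} | #|S| == i]]); last first.
  move=> S; rewrite inE; apply/andP/eqP => [[le_S_t /eqP <-]|S_i].
    by rewrite inordK ?ltnS.
  by rewrite S_i -ltnS ltn_ord inord_val.
rewrite (eq_bigr (fun=> (#|F| - 1) ^ i)); last by move=> S; rewrite inE => /eqP ->.
by rewrite sum_nat_const card_draws card_ord mulnC.
Qed.

(* The translates of the radius-t ball by the codewords are disjoint, so
   counting shows they fill F^m. *)
Lemma sphere_packing_covering m t (A : finType) (c : A -> 'rV[F]_m) :
  (forall u1 u2, u1 != u2 -> t.*2 < hamming (c u1) (c u2)) ->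
  #|F| ^ m <= #|A| * hamming_volume #|F| m t ->
  forall y, exists u, hamming (c u) y <= t.
Proof.
move=> dist_c vol_c y.
pose ball := [set z : 'rV[F]_m | #|row_support z| <= t].
pose D := setX [set: A] ball.
pose shift (uz : A * 'rV[F]_m) := (c uz.1 + uz.2)%R.
have shift_inj : {in D &, injective shift}.
  move=> [u1 z1] [u2 z2]; rewrite !inE /shift /= => z1t z2t eq_shift.
  have eq_u : u1 = u2.
    apply/eqP; apply: contraTT (hamming_triangle (c u1) (c u1 + z1)%R (c u2)).
    move=> /dist_c; rewrite -ltnNge; apply: leq_trans.
    rewrite hamming_addr eq_shift hamming_sym hamming_addr -addnn ltnS.
    exact: leq_add.
  by move: eq_shift; rewrite -eq_u => /addrI ->.
have /eqP shift_onto : shift @: D == [set: 'rV[F]_m].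
  rewrite eqEcard subsetT card_in_imset // cardsX !cardsT card_mx mul1n.
  by rewrite card_hamming_ball.
have /imsetP[[u z]] : y \in shift @: D by rewrite shift_onto inE.
by rewrite !inE /= => zt ->; exists u; rewrite hamming_addr.
Qed.

End HammingBall.

Section HammingVolume.
Variable q : nat.
Hypothesis q_gt0 : 0 < q.

Lemma hamming_volumeSS m t :
  hamming_volume q m.+1 t.+1 =
  hamming_volume q m t.+1 + (q - 1) * hamming_volume q m t.
Proof.
elim: t => [|t IHt].
  rewrite /hamming_volume !big_mkord !big_ord_recr !big_ord0 /=.
  by rewrite !bin0 !bin1 !expn0 !expn1; ring.
rewrite /hamming_volume big_nat_recr //= -/(hamming_volume q m.+1 t.+1) IHt binS.
rewrite (big_nat_recr t.+2) //= -/(hamming_volume q m t.+1).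
rewrite [X in _ = _ + _ * X]/hamming_volume (big_nat_recr t.+1) //=.
by rewrite -/(hamming_volume q m t) !expnS; ring.
Qed.

Lemma leq_hamming_volumeS m t : hamming_volume q m t <= hamming_volume q m t.+1.
Proof. by rewrite /hamming_volume (big_nat_recr t.+1) //= leq_addr. Qed.

Lemma hamming_volumeS_leq m t : hamming_volume q m.+1 t <= q * hamming_volume q m t.
Proof.
case: t => [|t]; first by rewrite /hamming_volume !big_nat1 !bin0 expn0 !muln1.
have -> : q * hamming_volume q m t.+1 =
    hamming_volume q m t.+1 + (q - 1) * hamming_volume q m t.+1.
  by rewrite -{1}(subnKC q_gt0) mulnDl mul1n.
by rewrite hamming_volumeSS leq_add2l leq_mul2l leq_hamming_volumeS orbT.
Qed.

Lemma hamming_volumeD_leq m d t :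
  hamming_volume q (m + d) t <= q ^ d * hamming_volume q m t.
Proof.
elim: d => [|d IHd]; first by rewrite addn0 mul1n.
rewrite addnS (leq_trans (hamming_volumeS_leq _ _)) //.
by rewrite expnS -mulnA leq_mul2l IHd orbT.
Qed.

Lemma pow_leq_hamming_volume n k r t :
  k + r <= n -> q ^ (n - k) = hamming_volume q n t ->
  q ^ r <= hamming_volume q (k + r) t.
Proof.
move=> krn perfect.
have := hamming_volumeD_leq (k + r) (n - k - r) t.
rewrite -subnDA subnKC // -perfect.
have -> : n - k = n - (k + r) + r by lia.
by rewrite expnD leq_pmul2l // expn_gt0 q_gt0.
Qed.

End HammingVolume.

Theorem corollary5 (F : finFieldType) (T : eqType) (k : nat)
  (f : 'rV[F]_k -> T) (dd df n : nat) :
  (exists u1 u2, f u1 != f u2) ->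
  0 < dd -> dd < df ->
  k <= n ->
  #|F| ^ (n - k) = \sum_(0 <= i < (dd - 1) %/ 2 + 1) 'C(n, i) * (#|F| - 1) ^ i ->
  forall r : nat, FCC_exists f dd df r -> n - k + 1 <= r.
Proof.
move=> [u1 [u2 f_u12]] dd_gt0 dd_lt_df kn perfect r [p [dist_dd dist_df]].
rewrite leqNgt addn1 ltnS; apply/negP => r_small.
set t := (dd - 1) %/ 2.
have t2_lt_dd : t.*2 < dd.
  by have := leq_divM (dd - 1) 2; rewrite -/t mulnC mul2n; lia.
have q_gt0 : 0 < #|F| by apply/card_gt0P; exists 0%R.
have covering : forall y, exists u, hamming (sys_enc p u) y <= t.
  apply: sphere_packing_covering.
    by move=> v1 v2 /dist_dd; apply: leq_trans.
  rewrite card_mx mul1n expnD leq_mul2l (@pow_leq_hamming_volume _ _ n) ?orbT //.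
  - lia.
  - by rewrite perfect addn1.
have f_near v1 v2 : hamming (sys_enc p v1) (sys_enc p v2) <= t.*2.+1 -> f v1 = f v2.
  move=> near; apply/eqP; apply: contraLR near => /dist_df; rewrite -ltnNge.
  by apply: leq_trans; apply: leq_ltn_trans dd_lt_df.
by rewrite (covering_code_const covering f_near u1 u2) eqxx in f_u12.
Qed.
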